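(* Let $G$ be a graph, $v$ a vertex of $G$, and let $G^v$ be the graph obtained from $G$ by adding a new vertex $v'$ with $N(v')=N(v)$. Then $G\in$ CBU if and only if $G^v\in$ CBU. Furthermore, if $G$ belongs to $d$-CBU then $G^v$ belongs to $(d+1)$-CBU.
   Context: Let $e_1,\ldots,e_d$ be the standard basis of $\mathbb{R}^d$. For $d\ge 1$, a graph belongs to $d$-CBU if one can assign to each vertex an axis-parallel box (product of $d$ closed intervals of positive length) in $\mathbb{R}^d$ such that the boxes have pairwise disjoint interiors, two distinct vertices are adjacent iff their boxes intersect, and any two intersecting boxes intersect in a $(d-1)$-dimensional box orthogonal to $e_1$. CBU is the union of the classes $d$-CBU over all $d\ge1$. *)

From Stdlib Require Import Reals.
From mathcomp Require Import all_boot.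
Set Implicit Arguments. Unset Strict Implicit. Unset Printing Implicit Defensive.

Open Scope R_scope.

(* A point of R^d: coordinates indexed by 'I_d; coordinate with index 0 is e_1. *)
Definition point (d : nat) := 'I_d -> R.

Record box (d : nat) := Box { lo : 'I_d -> R; hi : 'I_d -> R }.

Definition in_box d (b : box d) (x : point d) : Prop :=
  forall i, lo b i <= x i <= hi b i.

Definition in_interior d (b : box d) (x : point d) : Prop :=
  forall i, lo b i < x i < hi b i.

Definition facet_e1 d (b1 b2 : box d) : Prop :=
  exists (c : R) (l h : 'I_d -> R),
    (forall i : 'I_d, (i : nat) <> 0%N -> l i < h i) /\
    (forall x : point d, (in_box b1 x /\ in_box b2 x) <->
       (forall i : 'I_d, if (i : nat) == 0%N then x i = c else l i <= x i <= h i)).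

Definition is_dCBU (d : nat) (T : finType) (e : rel T) : Prop :=
  exists B : T -> box d,
    (forall u i, lo (B u) i < hi (B u) i) /\
    (forall u w, u <> w -> ~ (exists x, in_interior (B u) x /\ in_interior (B w) x)) /\
    (forall u w, u <> w -> (e u w <-> exists x, in_box (B u) x /\ in_box (B w) x)) /\
    (forall u w, u <> w -> (exists x, in_box (B u) x /\ in_box (B w) x) ->
                 facet_e1 (B u) (B w)).

Definition is_CBU (T : finType) (e : rel T) : Prop :=
  exists d, (1 <= d)%N /\ is_dCBU d e.

(* G^v: vertex set option T, where None is the new vertex v' with N(v') = N(v). *)
Definition add_twin (T : finType) (e : rel T) (v : T) : rel (option T) :=
  fun a b => match a, b with
  | Some x, Some y => e x y
  | None, Some y => e v y
  | Some x, None => e x v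
  | None, None => false
  end.

From Stdlib Require Import Reals Lra.
From mathcomp Require Import all_boot.

Set Implicit Arguments. Unset Strict Implicit. Unset Printing Implicit Defensive.
Local Open Scope R_scope.

(* Append a last coordinate to a representation of G in R^d: every box B u
   becomes the prism B u x [0,3], except that v gets B v x [0,1] and its twin
   v' gets B v x [2,3].  The two copies of B v are then disjoint, every other
   contact is a prism over a contact of G, and since the new coordinate is the
   last one, contact facets stay orthogonal to e_1.  Conversely, a
   representation of G^v restricts to one of the induced subgraph G. *)

Definition extend d (f : 'I_d -> R) (t : R) : 'I_d.+1 -> R :=
  fun i => if unlift ord_max i is Some j then f j else t.

Definition base d (x : point d.+1) : point d := fun j => x (lift ord_max j).

Definition prism d (b : box d) (p q : R) : box d.+1 :=
  Box (extend (lo b) p) (extend (hi b) q).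

Lemma extend_lift d (f : 'I_d -> R) t j : extend f t (lift ord_max j) = f j.
Proof. by rewrite /extend liftK. Qed.

Lemma extend_max d (f : 'I_d -> R) t : extend f t ord_max = t.
Proof. by rewrite /extend unlift_none. Qed.

Lemma val_lift_max d (j : 'I_d) : lift ord_max j = j :> nat.
Proof. by rewrite /= /bump leqNgt ltn_ord. Qed.

Lemma in_box_prism d (b : box d) p q (x : point d.+1) :
  in_box (prism b p q) x <-> in_box b (base x) /\ p <= x ord_max <= q.
Proof.
split=> [Hx | [Hb Ht] i].
- split; last by have := Hx ord_max; rewrite /= !extend_max.
  by move=> j; have := Hx (lift ord_max j); rewrite /= !extend_lift.
- by case: (unliftP ord_max i) => [j ->|->]; rewrite /= ?extend_lift ?extend_max //; apply: Hb.
Qed.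

Lemma in_interior_prism d (b : box d) p q (x : point d.+1) :
  in_interior (prism b p q) x <-> in_interior b (base x) /\ p < x ord_max < q.
Proof.
split=> [Hx | [Hb Ht] i].
- split; last by have := Hx ord_max; rewrite /= !extend_max.
  by move=> j; have := Hx (lift ord_max j); rewrite /= !extend_lift.
- by case: (unliftP ord_max i) => [j ->|->]; rewrite /= ?extend_lift ?extend_max //; apply: Hb.
Qed.

Lemma in_box_base_extend d (b : box d) (y : point d) t :
  in_box b (base (extend y t)) <-> in_box b y.
Proof. by split=> H j; have := H j; rewrite /base extend_lift. Qed.

Lemma in_interior_in_box d (b : box d) x : in_interior b x -> in_box b x.
Proof. by move=> H i; have := H i; lra. Qed.

Lemma interval_meet p1 q1 p2 q2 t :
  (p1 <= t <= q1 /\ p2 <= t <= q2) <-> Rmax p1 p2 <= t <= Rmin q1 q2.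
Proof.
split=> [[[? ?] [? ?]] | [Hp Hq]]; first by split; [apply: Rmax_lub | apply: Rmin_glb].
have := Rmax_l p1 p2; have := Rmax_r p1 p2; have := Rmin_l q1 q2; have := Rmin_r q1 q2.
lra.
Qed.

Lemma prism_meet d (b1 b2 : box d) p1 q1 p2 q2 :
  Rmax p1 p2 <= Rmin q1 q2 ->
  (exists x, in_box (prism b1 p1 q1) x /\ in_box (prism b2 p2 q2) x) <->
  (exists y, in_box b1 y /\ in_box b2 y).
Proof.
move=> Hpq; split=> [[x [/in_box_prism[Hx1 _] /in_box_prism[Hx2 _]]] | [y [Hy1 Hy2]]].
  by exists (base x).
exists (extend y (Rmax p1 p2)).
have [Ht1 Ht2] : p1 <= Rmax p1 p2 <= q1 /\ p2 <= Rmax p1 p2 <= q2.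
  by apply/interval_meet; split; [apply: Rle_refl | apply: Hpq].
by split; apply/in_box_prism; rewrite extend_max in_box_base_extend.
Qed.

Lemma prism_disjoint d (b1 b2 : box d) p1 q1 p2 q2 :
  q1 < p2 \/ q2 < p1 ->
  ~ exists x, in_box (prism b1 p1 q1) x /\ in_box (prism b2 p2 q2) x.
Proof. by move=> ? [x [/in_box_prism[_ ?] /in_box_prism[_ ?]]]; lra. Qed.

Lemma facet_e1_prism d (b1 b2 : box d) p1 q1 p2 q2 :
  (0 < d)%N -> Rmax p1 p2 < Rmin q1 q2 -> facet_e1 b1 b2 ->
  facet_e1 (prism b1 p1 q1) (prism b2 p2 q2).
Proof.
move=> d_gt0 Hpq [c [l [h [Hlh Hfacet]]]].
have max_neq0 : ((ord_max : 'I_d.+1) == 0%N :> nat) = false by rewrite /= eqn0Ngt d_gt0.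
exists c, (extend l (Rmax p1 p2)), (extend h (Rmin q1 q2)); split.
  by move=> i; case: (unliftP ord_max i) => [j ->|->];
     rewrite ?extend_lift ?extend_max ?val_lift_max //; apply: Hlh.
move=> x; rewrite !in_box_prism.
have -> : (in_box b1 (base x) /\ p1 <= x ord_max <= q1) /\
          (in_box b2 (base x) /\ p2 <= x ord_max <= q2) <->
          (in_box b1 (base x) /\ in_box b2 (base x)) /\
          (p1 <= x ord_max <= q1 /\ p2 <= x ord_max <= q2) by tauto.
rewrite Hfacet interval_meet; split=> [[Hb Ht] i | Hx].
  case: (unliftP ord_max i) => [j ->|->]; last by rewrite max_neq0 !extend_max.
  by rewrite val_lift_max !extend_lift; apply: Hb.
split; last by have := Hx ord_max; rewrite max_neq0 !extend_max.
by move=> j; have := Hx (lift ord_max j); rewrite val_lift_max !extend_lift.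
Qed.

Section Blowup.

Variables (d : nat) (T T' : finType) (e : rel T) (e' : rel T') (f : T' -> T).
Variables (lo' hi' : T' -> R).
Hypothesis d_gt0 : (0 < d)%N.
Hypothesis e_irr : irreflexive e.
Hypothesis e'_f : forall a b, a <> b -> e' a b = e (f a) (f b).
Hypothesis lo'_lt_hi' : forall a, lo' a < hi' a.
Hypothesis layers_disjoint :
  forall a b, a <> b -> f a = f b -> hi' a < lo' b \/ hi' b < lo' a.
Hypothesis layers_overlap :
  forall a b, f a <> f b -> Rmax (lo' a) (lo' b) < Rmin (hi' a) (hi' b).

Lemma is_dCBU_blowup : is_dCBU d e -> is_dCBU d.+1 e'.
Proof.
move=> [B [B_lt [B_int [B_adj B_facet]]]].
pose B' a := prism (B (f a)) (lo' a) (hi' a).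
have meet_twins a b : a <> b -> f a = f b ->
    ~ exists x, in_box (B' a) x /\ in_box (B' b) x.
  by move=> ab fab; apply: prism_disjoint; apply: layers_disjoint.
have meet_other a b : f a <> f b ->
    (exists x, in_box (B' a) x /\ in_box (B' b) x) <->
    (exists y, in_box (B (f a)) y /\ in_box (B (f b)) y).
  by move=> fab; apply: prism_meet; apply: Rlt_le; apply: layers_overlap.
exists B'; split; [|split; [|split]].
- move=> a i; rewrite /B' /=.
  by case: (unliftP ord_max i) => [j ->|->]; rewrite ?extend_lift ?extend_max.
- move=> a b ab [x [Ha Hb]].
  have [fab | fab] := eqVneq (f a) (f b).
    by apply: (meet_twins a b ab fab); exists x; split; apply: in_interior_in_box.
  move: Ha Hb; rewrite /B' !in_interior_prism => -[Ha _] [Hb _].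
  by apply: (B_int _ _ (elimN eqP fab)); exists (base x).
- move=> a b ab; rewrite e'_f //.
  have [fab | /eqP fab] := eqVneq (f a) (f b).
    by rewrite fab e_irr; split=> // /(meet_twins a b ab).
  by rewrite meet_other // B_adj.
- move=> a b ab Hab; have [fab | /eqP fab] := eqVneq (f a) (f b).
    by case: (meet_twins a b ab fab).
  by apply: facet_e1_prism => //; [apply: layers_overlap | apply: B_facet => //; apply/meet_other].
Qed.

End Blowup.

Lemma is_dCBU_relpre d (T T' : finType) (e : rel T) (f : T' -> T) :
  injective f -> is_dCBU d e -> is_dCBU d (relpre f e).
Proof.
move=> f_inj [B [B_lt [B_int [B_adj B_facet]]]].
have f_neq a b : a <> b -> f a <> f b by move=> ab /f_inj.
exists (B \o f); split; [|split; [|split]] => [a|a b /f_neq|a b /f_neq|a b /f_neq] //=.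
- exact: B_int.
- exact: B_adj.
- exact: B_facet.
Qed.

Section Twin.

Variables (T : finType) (e : rel T) (v : T).
Hypothesis e_irr : irreflexive e.

Let twin_lo (a : option T) : R := if a is None then 2 else 0.
Let twin_hi (a : option T) : R := if a == Some v then 1 else 3.

Lemma twin_lo_lt_hi a : twin_lo a < twin_hi a.
Proof. by rewrite /twin_lo /twin_hi; case: a => [u|] /=; [case: (_ == _)|]; lra. Qed.

Lemma twin_lo_lt_hi_cross a b : odflt v a <> odflt v b -> twin_lo a < twin_hi b.
Proof.
rewrite /twin_lo /twin_hi; case: a b => [u|] [w|] /= ab.
- by case: (_ == _); lra.
- lra.
- have /negbTE -> : Some w != Some v by apply/eqP => -[wv]; apply: ab.
  lra.
- by case: ab.
Qed.

Lemma is_dCBU_add_twin d : (0 < d)%N -> is_dCBU d e -> is_dCBU d.+1 (add_twin e v).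
Proof.
move=> d_gt0; apply: (is_dCBU_blowup (f := odflt v) (lo' := twin_lo) (hi' := twin_hi)) => //.
- by case=> [u|] [w|] //= _; rewrite e_irr.
- exact: twin_lo_lt_hi.
- rewrite /twin_lo /twin_hi => -[u|] [w|] /= ab fab.
  + by case: ab; rewrite fab.
  + by rewrite fab eqxx; lra.
  + by rewrite -fab eqxx; lra.
  + by case: ab.
- move=> a b ab; apply: Rmax_lub_lt; apply: Rmin_glb_lt;
    by [apply: twin_lo_lt_hi | apply: twin_lo_lt_hi_cross => // /esym].
Qed.

End Twin.

Theorem mainTheorem10 (T : finType) (e : rel T)
  (e_sym : symmetric e) (e_irr : irreflexive e) (v : T) :
  (is_CBU e <-> is_CBU (add_twin e v)) /\
  (forall d : nat, (1 <= d)%N -> is_dCBU d e -> is_dCBU d.+1 (add_twin e v)).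
Proof.
have twin_CBU d : (1 <= d)%N -> is_dCBU d e -> is_dCBU d.+1 (add_twin e v).
  exact: is_dCBU_add_twin.
split=> //; split=> [[d [d_gt0 G_CBU]] | [d [d_gt0 Gv_CBU]]].
  by exists d.+1; split; last exact: twin_CBU.
by exists d; split; last exact: (is_dCBU_relpre (@Some_inj _) Gv_CBU).
Qed.
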